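(* Fix a node $p$ with $N_p\ge1$ neighbors, integers $d\ge1$, $B_p\ge1$, constants $C^R>0$, $\rho>0$, $\eta>0$, a privacy parameter $\alpha>0$, and fixed vectors $\lambda\in\mathbb{R}^d$ and $a_i\in\mathbb{R}^d$ for $i\in\mathcal{N}_p$ (not depending on the dataset; in the algorithm $a_i=\frac12(f_p(t)+V_i(t)-\epsilon_p(t))$). For a dataset $D_p=((x_j,y_j))_{j=1}^{B_p}$ let $$g(D_p)=\arg\min_{f\in\mathbb{R}^d}\ \frac{C^R}{B_p}\sum_{j=1}^{B_p}\mathcal{L}(y_jf^Tx_j)+\rho R(f)+2\lambda^Tf+\eta\sum_{i\in\mathcal{N}_p}\|f-a_i\|^2,$$ and release $V=g(D_p)+\epsilon$, where $\epsilon\in\mathbb{R}^d$ is drawn independently with density proportional to $e^{-\zeta\|\epsilon\|}$, $\zeta=\frac{\rho B_p\alpha}{2C^R}$. Then for any two neighboring datasets $D_p,D_p'$, the densities $Q(\cdot\mid D_p)$, $Q(\cdot\mid D'_p)$ of $V$ satisfy $\frac{Q(v\mid D_p)}{Q(v\mid D_p')}\le e^{\alpha}$ for all $v\in\mathbb{R}^d$.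
   Context: Data points satisfy $x_j\in\mathbb{R}^d$ with $\|x_j\|\le 1$ (Euclidean norm) and $y_j\in\{-1,1\}$. The loss $\mathcal{L}:\mathbb{R}\to\mathbb{R}$ is convex and differentiable with $|\mathcal{L}'|\le1$. The regularizer $R:\mathbb{R}^d\to\mathbb{R}$ is continuously differentiable and 1-strongly convex. Two datasets of the same size $B_p$ are neighboring if they differ in exactly one data point. *)

From Stdlib Require Import Reals.
From mathcomp Require Import all_boot.
Set Implicit Arguments. Unset Strict Implicit. Unset Printing Implicit Defensive.
Open Scope R_scope.

Definition vec (d : nat) := 'I_d -> R.

Definition vsum (n : nat) (F : 'I_n -> R) : R := \big[Rplus/0]_(i < n) F i.

Definition dot (d : nat) (u v : vec d) : R := vsum (fun i => u i * v i).
Definition vnorm (d : nat) (u : vec d) : R := sqrt (dot u u).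
Definition vadd (d : nat) (u v : vec d) : vec d := fun i => u i + v i.
Definition vsub (d : nat) (u v : vec d) : vec d := fun i => u i - v i.
Definition vscale (d : nat) (c : R) (u : vec d) : vec d := fun i => c * u i.

Definition convex_fun (L : R -> R) : Prop :=
  forall x y t, 0 <= t <= 1 -> L (t * x + (1 - t) * y) <= t * L x + (1 - t) * L y.

Definition diff_deriv_bounded (L : R -> R) : Prop :=
  forall x, exists l, derivable_pt_lim L x l /\ Rabs l <= 1.

Definition has_gradient (d : nat) (F : vec d -> R) (G : vec d -> vec d) : Prop :=
  forall x eps, 0 < eps -> exists delta, 0 < delta /\
    forall h : vec d, vnorm h < delta ->
      Rabs (F (vadd x h) - F x - dot (G x) h) <= eps * vnorm h.

Definition vcontinuous (d : nat) (G : vec d -> vec d) : Prop :=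
  forall x eps, 0 < eps -> exists delta, 0 < delta /\
    forall y : vec d, vnorm (vsub y x) < delta -> vnorm (vsub (G y) (G x)) < eps.

Definition continuously_differentiable (d : nat) (F : vec d -> R) : Prop :=
  exists G, has_gradient F G /\ vcontinuous G.

Definition strongly_convex1 (d : nat) (F : vec d -> R) : Prop :=
  forall x y t, 0 <= t <= 1 ->
    F (vadd (vscale t x) (vscale (1 - t) y))
      <= t * F x + (1 - t) * F y - t * (1 - t) / 2 * (vnorm (vsub x y)) ^ 2.

Record dataset (d Bp : nat) := Dataset { dx : 'I_Bp -> vec d; dy : 'I_Bp -> R }.

Definition valid_dataset (d Bp : nat) (D : dataset d Bp) : Prop :=
  forall j, vnorm (dx D j) <= 1 /\ (dy D j = 1 \/ dy D j = -1).

Definition neighboring (d Bp : nat) (D D' : dataset d Bp) : Prop :=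
  exists k : 'I_Bp,
    (dx D k, dy D k) <> (dx D' k, dy D' k) /\
    forall j : 'I_Bp, j <> k -> dx D j = dx D' j /\ dy D j = dy D' j.

Definition objective (d Bp Np : nat) (L : R -> R) (Reg : vec d -> R)
    (CR rho eta : R) (lam : vec d) (a : 'I_Np -> vec d) (D : dataset d Bp)
    (f : vec d) : R :=
  CR / INR Bp * vsum (fun j => L (dy D j * dot f (dx D j)))
  + rho * Reg f + 2 * dot lam f
  + eta * vsum (fun i => (vnorm (vsub f (a i))) ^ 2).

Definition is_argmin (d : nat) (J : vec d -> R) (f : vec d) : Prop :=
  forall h, J f <= J h.

(* density of V = c + eps where eps has density K * exp(-zeta ||eps||),
   K being the (dataset-independent) normalizing constant *)
Definition laplace_density (d : nat) (K zeta : R) (c v : vec d) : R :=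
  K * exp (- zeta * vnorm (vsub v c)).

(* The objective J_D is rho-strongly convex, so its minimizer g satisfies
   J_D h - J_D g >= rho/2 ||h - g||^2.  Adding this inequality for D at g' and
   for D' at g gives rho ||g - g'||^2 <= (J_D - J_D')(g') - (J_D - J_D')(g).
   For neighbouring datasets J_D - J_D' only involves the loss at the one
   differing point, which is 2 C^R / B_p-Lipschitz because |L'| <= 1,
   ||x_j|| <= 1 and |y_j| = 1.  Hence ||g - g'|| <= 2 C^R / (rho B_p), and the
   triangle inequality bounds the log-ratio of the two Laplace densities by
   zeta ||g - g'|| <= alpha. *)

From Stdlib Require Import Reals Lra ClassicalEpsilon.
From mathcomp Require Import all_boot Rstruct.
Open Scope R_scope.

Set Implicit Arguments. Unset Strict Implicit. Unset Printing Implicit Defensive.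

Section FiniteSums.
Variable n : nat.
Implicit Types F G : 'I_n -> R.

Lemma vsumD F G : vsum (fun i => F i + G i) = vsum F + vsum G.
Proof. by rewrite /vsum big_split. Qed.

Lemma vsumZ c F : vsum (fun i => c * F i) = c * vsum F.
Proof. rewrite /vsum; elim/big_rec2: _ => [|i x y _ ->]; lra. Qed.

Lemma eq_vsum F G : (forall i, F i = G i) -> vsum F = vsum G.
Proof. by move=> FG; apply: eq_bigr => i _. Qed.

Lemma ler_vsum F G : (forall i, F i <= G i) -> vsum F <= vsum G.
Proof.
move=> FG; rewrite /vsum; elim/big_rec2: _ => [|i x y _ Hxy]; first lra.
by have := FG i; lra.
Qed.

Lemma vsum_eq_single F k : (forall j, j <> k -> F j = 0) -> vsum F = F k.
Proof.
move=> F0; rewrite /vsum (bigD1 k) //= big1; first lra.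
by move=> j /eqP; apply: F0.
Qed.

End FiniteSums.

Section EuclideanSpace.
Variable d : nat.
Implicit Types u v w : vec d.

Lemma dotC u v : dot u v = dot v u.
Proof. by apply: eq_vsum => i; ring. Qed.

Lemma dot_ge0 u : 0 <= dot u u.
Proof. rewrite /dot /vsum; elim/big_rec: _ => [|i x _ Hx]; nra. Qed.

Lemma vnorm_ge0 u : 0 <= vnorm u.
Proof. exact: sqrt_pos. Qed.

Lemma vnorm_sqr u : vnorm u ^ 2 = dot u u.
Proof. by rewrite /vnorm /= Rmult_1_r sqrt_sqrt //; apply: dot_ge0. Qed.

Lemma eq_vnorm u w : (forall i, u i = w i) -> vnorm u = vnorm w.
Proof. by move=> uw; rewrite /vnorm /dot; congr sqrt; apply: eq_vsum => i; rewrite uw. Qed.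

Lemma vnormB_sym u w : vnorm (vsub u w) = vnorm (vsub w u).
Proof. by rewrite /vnorm /dot; congr sqrt; apply: eq_vsum => i; rewrite /vsub; ring. Qed.

Lemma dotBl u w v : dot (vsub u w) v = dot u v - dot w v.
Proof.
have -> : forall x y : R, x - y = x + (-1) * y by move=> x y; ring.
rewrite /dot -vsumZ -vsumD.
by apply: eq_vsum => i; rewrite /vsub; ring.
Qed.

Lemma dotDl_scale t s u w v :
  dot (vadd (vscale t u) (vscale s w)) v = t * dot u v + s * dot w v.
Proof. by rewrite /dot -!vsumZ -vsumD; apply: eq_vsum => i; rewrite /vadd /vscale; ring. Qed.

Lemma discriminant_le (a b c : R) :
  0 <= c -> (forall t, 0 <= a + 2 * b * t + c * t ^ 2) -> b ^ 2 <= a * c.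
Proof.
move=> c_ge0 pos; case: (Rle_lt_or_eq_dec _ _ c_ge0) => [c_gt0 | c0].
  have := pos (- b / c).
  have -> : a + 2 * b * (- b / c) + c * (- b / c) ^ 2 = (a * c - b ^ 2) / c by field; lra.
  move=> /(Rmult_le_compat_r c _ _ (Rlt_le _ _ c_gt0)).
  rewrite Rmult_0_l /Rdiv Rmult_assoc Rinv_l; lra.
rewrite -c0 in pos *; case: (Req_dec b 0) => [-> | b_neq0]; first lra.
have := pos (- (a + 1) / (2 * b)).
have -> : a + 2 * b * (- (a + 1) / (2 * b)) + 0 * (- (a + 1) / (2 * b)) ^ 2 = -1 by field.
lra.
Qed.

Lemma cauchy_schwarz u v : Rabs (dot u v) <= vnorm u * vnorm v.
Proof.
have sq : (dot u v) ^ 2 <= dot u u * dot v v.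
  apply: discriminant_le => [|t]; first exact: dot_ge0.
  have -> : dot u u + 2 * dot u v * t + dot v v * t ^ 2
          = dot (fun i => u i + t * v i) (fun i => u i + t * v i).
    rewrite [LHS](_ : _ = dot u u + (2 * t) * dot u v + t ^ 2 * dot v v); last ring.
    by rewrite /dot -!vsumZ -!vsumD; apply: eq_vsum => i; ring.
  exact: dot_ge0.
rewrite /vnorm -sqrt_mult; try exact: dot_ge0.
rewrite -sqrt_Rsqr_abs.
by apply: sqrt_le_1_alt; rewrite /Rsqr; lra.
Qed.

Lemma vnorm_triangle u w : vnorm (vadd u w) <= vnorm u + vnorm w.
Proof.
have := vnorm_ge0 u; have := vnorm_ge0 w; have := vnorm_ge0 (vadd u w).
have expand : vnorm (vadd u w) ^ 2 = vnorm u ^ 2 + 2 * dot u w + vnorm w ^ 2.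
  by rewrite !vnorm_sqr /dot -!vsumZ -!vsumD; apply: eq_vsum => i; rewrite /vadd; ring.
have := cauchy_schwarz u w; have := Rle_abs (dot u w).
move: expand => /=; rewrite !Rmult_1_r => expand *.
by apply: Rsqr_incr_0_var; rewrite /Rsqr; nra.
Qed.

End EuclideanSpace.

Lemma lipschitz_of_deriv_bounded (L : R -> R) :
  diff_deriv_bounded L -> forall a b, Rabs (L b - L a) <= Rabs (b - a).
Proof.
move=> dL a b.
pose L' x := proj1_sig (constructive_indefinite_description _ (dL x)).
have L'P x : derivable_pt_lim L x (L' x) /\ Rabs (L' x) <= 1.
  exact: proj2_sig (constructive_indefinite_description _ (dL x)).
have [c [-> _]] := MVT_abs L L' a b (fun c _ => proj1 (L'P c)).
have := proj2 (L'P c); have := Rabs_pos (b - a); have := Rabs_pos (L' c); nra.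
Qed.

Lemma le_of_forall_shrink (b c : R) : (forall t, 0 < t <= 1 -> (1 - t) * c <= b) -> c <= b.
Proof.
move=> shrink; have b_ge0 : 0 <= b by have := shrink 1; lra.
apply: Rnot_lt_le => b_lt_c.
have inv_c : / c * c = 1 by field; lra.
have inv_c_gt0 : 0 < / c by apply: Rinv_0_lt_compat; lra.
have := shrink ((c - b) / 2 * / c); rewrite /Rdiv; nra.
Qed.

Lemma div_INR_ge0 (n : nat) (c : R) : 0 <= c -> 0 <= c / INR n.
Proof.
move=> c_ge0; case: (Rle_lt_or_eq_dec _ _ (pos_INR n)) => [n_gt0 | <-].
  exact: Rmult_le_pos c_ge0 (Rlt_le _ _ (Rinv_0_lt_compat _ n_gt0)).
by rewrite /Rdiv Rinv_0 Rmult_0_r; apply: Rle_refl.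
Qed.

Section StrongConvexity.
Variable d : nat.
Implicit Types (x y f h g : vec d) (J : vec d -> R).

Definition comb (t : R) x y : vec d := vadd (vscale t x) (vscale (1 - t) y).

Definition strongly_convex (mu : R) J := forall x y t, 0 <= t <= 1 ->
  J (comb t x y) <= t * J x + (1 - t) * J y - mu * (t * (1 - t) / 2) * vnorm (vsub x y) ^ 2.

Lemma strongly_convex_of_strongly_convex1 (Reg : vec d -> R) : strongly_convex1 Reg -> strongly_convex 1 Reg.
Proof. by move=> sc x y t t01; have := sc x y t t01; rewrite /comb; lra. Qed.

Lemma convex_vsum n (F : 'I_n -> vec d -> R) :
  (forall i, strongly_convex 0 (F i)) -> strongly_convex 0 (fun f => vsum (fun i => F i f)).
Proof.
move=> cvx x y t t01; rewrite !Rmult_0_l Rminus_0_r -!vsumZ -vsumD.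
by apply: ler_vsum => i; have := cvx i x y t t01; lra.
Qed.

Lemma convex_margin_loss (L : R -> R) (c : R) (z : vec d) :
  convex_fun L -> strongly_convex 0 (fun f => L (c * dot f z)).
Proof.
move=> cvx x y t t01; rewrite /comb dotDl_scale.
have -> : c * (t * dot x z + (1 - t) * dot y z) = t * (c * dot x z) + (1 - t) * (c * dot y z) by ring.
by have := cvx (c * dot x z) (c * dot y z) t t01; lra.
Qed.

Lemma convex_sqr_dist (a : vec d) : strongly_convex 0 (fun f => vnorm (vsub f a) ^ 2).
Proof.
move=> x y t [t_ge0 t_le1]; rewrite !vnorm_sqr /dot !Rmult_0_l Rminus_0_r -!vsumZ -vsumD.
apply: ler_vsum => k; rewrite /vsub /comb /vadd /vscale.
have : 0 <= t * (1 - t) * ((x k - y k) * (x k - y k)).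
  apply: Rmult_le_pos; first nra.
  exact: Rle_0_sqr.
nra.
Qed.

Lemma objective_strongly_convex Bp Np (L : R -> R) (Reg : vec d -> R) (CR rho eta : R)
    (lam : vec d) (a : 'I_Np -> vec d) (D : dataset d Bp) :
  0 <= CR -> 0 <= rho -> 0 <= eta -> convex_fun L -> strongly_convex1 Reg ->
  strongly_convex rho (objective L Reg CR rho eta lam a D).
Proof.
move=> CR_ge0 rho_ge0 eta_ge0 cvxL scReg x y t t01; rewrite /objective.
have data := convex_vsum (fun j => convex_margin_loss (dy D j) (dx D j) cvxL) x y t01.
have reg := strongly_convex_of_strongly_convex1 scReg x y t01.
have pen := convex_vsum (fun i => convex_sqr_dist (a i)) x y t01.
have lin : dot lam (comb t x y) = t * dot lam x + (1 - t) * dot lam y.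
  by rewrite /comb dotC dotDl_scale (dotC x) (dotC y).
have coef_ge0 := div_INR_ge0 Bp CR_ge0.
move: data reg pen; rewrite !Rmult_0_l !Rminus_0_r lin /= => data reg pen.
have := Rmult_le_compat_l _ _ _ coef_ge0 data.
have := Rmult_le_compat_l _ _ _ eta_ge0 pen.
by have := Rmult_le_compat_l _ _ _ rho_ge0 reg; nra.
Qed.

Lemma strongly_convex_argmin_growth mu J g h :
  strongly_convex mu J -> is_argmin J g -> mu / 2 * vnorm (vsub h g) ^ 2 <= J h - J g.
Proof.
move=> sc min_g; apply: le_of_forall_shrink => t t01.
have := sc h g t (conj (Rlt_le _ _ (proj1 t01)) (proj2 t01)).
have := min_g (comb t h g).
move=> le_comb le_sc; apply: (Rmult_le_reg_l t); first lra.
by nra.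
Qed.

Lemma argmin_sensitivity mu ell J J' g g' :
  0 < mu -> 0 <= ell -> strongly_convex mu J -> strongly_convex mu J' ->
  is_argmin J g -> is_argmin J' g' ->
  (forall x y, Rabs ((J x - J' x) - (J y - J' y)) <= ell * vnorm (vsub x y)) ->
  vnorm (vsub g g') <= ell / mu.
Proof.
move=> mu_gt0 ell_ge0 sc sc' min_g min_g' lip.
have grow := strongly_convex_argmin_growth g' sc min_g.
have grow' := strongly_convex_argmin_growth g sc' min_g'.
have lip_gg' := lip g' g; have := Rle_abs ((J g' - J' g') - (J g - J' g)).
rewrite (vnormB_sym g') in grow lip_gg'.
have := vnorm_ge0 (vsub g g') => n_ge0 abs_le.
set n := vnorm (vsub g g') in grow grow' lip_gg' n_ge0 *.
have key : mu * n ^ 2 <= ell * n by nra.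
apply: (Rmult_le_reg_r mu) => //; rewrite /Rdiv Rmult_assoc Rinv_l; last lra.
case: (Rle_lt_or_eq_dec _ _ n_ge0) => [n_gt0 | <-]; last lra.
by apply: (Rmult_le_reg_r n) => //; move: key => /=; nra.
Qed.

End StrongConvexity.

Section NeighboringDatasets.
Variables (d Bp Np : nat) (L : R -> R) (Reg : vec d -> R) (CR rho eta : R).
Variables (lam : vec d) (a : 'I_Np -> vec d).

Lemma margin_loss_lipschitz (z : vec d) (y : R) (f h : vec d) :
  diff_deriv_bounded L -> vnorm z <= 1 -> y = 1 \/ y = -1 ->
  Rabs (L (y * dot f z) - L (y * dot h z)) <= vnorm (vsub f h).
Proof.
move=> dL z_le1 y_pm1.
apply: Rle_trans (lipschitz_of_deriv_bounded dL _ _) _.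
have -> : y * dot f z - y * dot h z = y * dot (vsub f h) z by rewrite dotBl; ring.
have abs_y : Rabs y = 1 by case: y_pm1 => ->; [rewrite Rabs_R1 | rewrite Rabs_Ropp Rabs_R1].
rewrite Rabs_mult abs_y Rmult_1_l; apply: Rle_trans (cauchy_schwarz _ _) _.
by have := vnorm_ge0 (vsub f h); have := vnorm_ge0 z; nra.
Qed.

Lemma objective_sub_neighboring (D D' : dataset d Bp) (k : 'I_Bp) (f : vec d) :
  (forall j, j <> k -> dx D j = dx D' j /\ dy D j = dy D' j) ->
  objective L Reg CR rho eta lam a D f - objective L Reg CR rho eta lam a D' f
  = CR / INR Bp * (L (dy D k * dot f (dx D k)) - L (dy D' k * dot f (dx D' k))).
Proof.
move=> agree; rewrite /objective.
rewrite [in X in X - _](_ : vsum _ = vsum (fun j => L (dy D j * dot f (dx D j))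
                                               - L (dy D' j * dot f (dx D' j)))
                                    + vsum (fun j => L (dy D' j * dot f (dx D' j)))).
  by rewrite (@vsum_eq_single _ _ k) //; [ring | move=> j /agree [-> ->]; ring].
by rewrite -vsumD; apply: eq_vsum => j; ring.
Qed.

Lemma objective_sub_lipschitz (D D' : dataset d Bp) :
  0 <= CR -> diff_deriv_bounded L -> valid_dataset D -> valid_dataset D' ->
  neighboring D D' -> forall x y,
  Rabs ((objective L Reg CR rho eta lam a D x - objective L Reg CR rho eta lam a D' x)
        - (objective L Reg CR rho eta lam a D y - objective L Reg CR rho eta lam a D' y))
  <= 2 * CR / INR Bp * vnorm (vsub x y).
Proof.
move=> CR_ge0 dL validD validD' [k [_ agree]] x y.
rewrite !(objective_sub_neighboring _ agree) -Rmult_minus_distr_l Rabs_mult.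
have coef_ge0 := div_INR_ge0 Bp CR_ge0.
have -> : 2 * CR / INR Bp * vnorm (vsub x y) = CR / INR Bp * (2 * vnorm (vsub x y)).
  by rewrite /Rdiv; ring.
rewrite (Rabs_pos_eq _ coef_ge0); apply: Rmult_le_compat_l => //.
have [zD yD] := validD k; have [zD' yD'] := validD' k.
have := margin_loss_lipschitz x y dL zD yD.
have := margin_loss_lipschitz x y dL zD' yD'.
set lD := L (_ * dot x (dx D k)) - _; set lD' := L (_ * dot x (dx D' k)) - _.
move=> bD' bD; have := Rabs_triang lD (- lD'); rewrite Rabs_Ropp.
have -> : lD + - lD' = (L (dy D k * dot x (dx D k)) - L (dy D' k * dot x (dx D' k)))
                     - (L (dy D k * dot y (dx D k)) - L (dy D' k * dot y (dx D' k))).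
  by rewrite /lD /lD'; ring.
lra.
Qed.

End NeighboringDatasets.

Lemma laplace_density_ratio_le (d : nat) (K zeta : R) (c c' v : vec d) :
  0 < K -> 0 <= zeta ->
  laplace_density K zeta c v / laplace_density K zeta c' v <= exp (zeta * vnorm (vsub c c')).
Proof.
move=> K_gt0 zeta_ge0; rewrite /laplace_density.
set A := vnorm (vsub v c); set B := vnorm (vsub v c').
have -> : K * exp (- zeta * A) / (K * exp (- zeta * B)) = exp (zeta * (B - A)).
  have -> : exp (- zeta * A) = exp (zeta * (B - A)) * exp (- zeta * B).
    by rewrite -exp_plus; congr exp; ring.
  by field; split; [apply: Rgt_not_eq; apply: exp_pos | lra].
have triangle : B <= A + vnorm (vsub c c').
  have -> : B = vnorm (vadd (vsub v c) (vsub c c')).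
    by apply: eq_vnorm => i; rewrite /vadd /vsub; ring.
  exact: vnorm_triangle.
apply: Rnot_lt_le => /exp_lt_inv.
by have := Rmult_le_compat_l _ _ _ zeta_ge0 triangle; lra.
Qed.

Theorem theorem2 (d Bp Np : nat) (L : R -> R) (Reg : vec d -> R)
    (CR rho eta alpha : R) (lam : vec d) (a : 'I_Np -> vec d) (K : R)
    (hd : (1 <= d)%nat) (hBp : (1 <= Bp)%nat) (hNp : (1 <= Np)%nat)
    (hCR : 0 < CR) (hrho : 0 < rho) (heta : 0 < eta) (halpha : 0 < alpha)
    (hLconv : convex_fun L) (hLdiff : diff_deriv_bounded L)
    (hRC1 : continuously_differentiable Reg) (hRsc : strongly_convex1 Reg)
    (hK : 0 < K)
    (D D' : dataset d Bp) (hD : valid_dataset D) (hD' : valid_dataset D')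
    (hneigh : neighboring D D')
    (g g' : vec d)
    (hg : is_argmin (objective L Reg CR rho eta lam a D) g)
    (hg' : is_argmin (objective L Reg CR rho eta lam a D') g') :
  let zeta := rho * INR Bp * alpha / (2 * CR) in
  forall v : vec d,
    laplace_density K zeta g v / laplace_density K zeta g' v <= exp alpha.
Proof.
move=> zeta v.
have Bp_gt0 : 0 < INR Bp by apply: lt_0_INR; apply/ltP.
have zeta_ge0 : 0 <= zeta.
  by apply: Rlt_le; apply: Rdiv_lt_0_compat; [apply: Rmult_lt_0_compat; nra | lra].
have sc (E : dataset d Bp) := objective_strongly_convex lam a E (Rlt_le _ _ hCR) (Rlt_le _ _ hrho)
                (Rlt_le _ _ heta) hLconv hRsc.
have sensitivity : vnorm (vsub g g') <= 2 * CR / INR Bp / rho.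
  apply: argmin_sensitivity hrho _ (sc D) (sc D') hg hg' _.
    by apply: Rlt_le; apply: Rdiv_lt_0_compat; lra.
  exact (objective_sub_lipschitz Reg rho eta lam a (Rlt_le _ _ hCR) hLdiff hD hD' hneigh).
apply: Rle_trans (laplace_density_ratio_le _ _ _ hK zeta_ge0) _.
apply: Rnot_lt_le => /exp_lt_inv.
have : zeta * (2 * CR / INR Bp / rho) = alpha by rewrite /zeta; field; lra.
by have := Rmult_le_compat_l _ _ _ zeta_ge0 sensitivity; lra.
Qed.
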